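(* In the situation described in the context: (1) for each $r\in[1,\sigma]$, $V=X_r\oplus X_r^\perp$. (2) Assume moreover that $g$ is unipotent and put $N=g-1$, $p_{\sigma+1}=\kappa/2$, and $\Lambda_k=\sum_{r\in[1,\sigma+1]}\max(2p_r-k,0)$ for $k\ge 0$. Then $\dim N^kV\ge\Lambda_k$ for every $k\ge0$, with equality for $k=0$. (3) If $\dim N^kV=\Lambda_k$ for all $k\ge0$, then each $X_r$ ($r\in[1,\sigma+1]$) is $g$-stable and $(X_r,X_{r'})=0$ for all $r\ne r'$ in $[1,\sigma+1]$.
   Context: Let $\mathbf k$ be algebraically closed of characteristic $p$. Let $V$ be a $\mathbf k$-vector space of dimension $\mathfrak n\ge3$, $\kappa\in\{0,1\}$ with $\kappa\equiv\mathfrak n\pmod2$, $n=(\mathfrak n-\kappa)/2$, with a bilinear form $(\,,)$ and quadratic form $Q$ such that either (i) $Q=0$, $(x,x)=0$ for all $x$, $V^\perp=0$; or (ii) $Q\neq0$, $(x,y)=Q(x+y)-Q(x)-Q(y)$, $Q|_{V^\perp}$ injective. $Is(V)$ is the group of $g\in GL(V)$ preserving $(\,,)$ and $Q$. $\mathcal F$ is the set of flags $V_*=(0=V_0\subset\dots\subset V_{\mathfrak n}=V)$, $\dim V_i=i$, with $Q|_{V_i}=0$ and $V_i^\perp=V_{\mathfrak n-i}$ for $i\in[0,n]$. For $V_*,V'_*\in\mathcal F$, $a_{V_*,V'_*}$ is the permutation $i\mapsto a_i$ of $[1,\mathfrak n]$ where $X_i=\{j: V'_i\cap V_j\ne V'_i\cap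 V_{j-1}\}$ and $X_i=X_{i-1}\sqcup\{a_i\}$. For $p_*=(p_1\ge\dots\ge p_\sigma)$, integers $\ge1$ with sum $n$, $p_{<r}=\sum_{r'<r}p_{r'}$, $p_{\le r}=\sum_{r'\le r}p_{r'}$, and $w_{p_*}$ is the permutation with cycles $p_{<r}+1\mapsto\dots\mapsto p_{\le r}\mapsto\mathfrak n-p_{<r}\mapsto\dots\mapsto\mathfrak n-p_{\le r}+1\mapsto p_{<r}+1$ ($r\in[1,\sigma]$), fixing $n+1$ if $\kappa=1$. Situation: $V_*,V'_*\in\mathcal F$ with $a_{V_*,V'_*}=w_{p_*}$, $g\in Is(V)$ with $gV_*=V'_*$, and $v_1,\dots,v_\sigma\in V$ (and $v_{\sigma+1}$ if $\kappa=1$) such that, writing $Z_k$ for the span of $v_k,gv_k,\dots,g^{p_k-1}v_k$: $V_{p_{<r}+i}=Z_1+\dots+Z_{r-1}+\mathrm{span}(v_r,\dots,g^{i-1}v_r)$ for $i\in[0,p_r]$; $(g^iv_t,v_r)=0$ for $t<r\le\sigma$, $i\in[-p_t,p_t-1]$; $(v_r,g^iv_r)=0$ for $|i|\le p_r-1$, $Q(v_r)=0$, $(v_r,g^{p_r}v_r)=1$; and, if $\kappa=1$, $(g^iv_t,v_{\sigma+1})=0$ for $t\in[1,\sigma]$, $i\in[-p_t,p_t-1]$ and $Q(v_{\sigma+1})=1$. (Such vectors exist and the vectors $g^jv_t$, $t\in[1,\sigma]$, $j\in[-p_t,p_t-1]$, together with $v_{\sigma+1}$ if $\kappa=1$, form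 a basis of $V$.) For $r\in[1,\sigma]$, $X_r$ is the span of $g^{-p_r+i}v_r$, $i\in[0,2p_r-1]$; $X_{\sigma+1}=0$ if $\kappa=0$ and $X_{\sigma+1}=\mathbf k v_{\sigma+1}$ if $\kappa=1$. *)

(* V = 'rV[K]_nn (row vectors); a linear map g acts by x |-> x *m g;
   subspaces are represented by (square) matrices via their row space (mxalgebra). *)
From HB Require Import structures.
From mathcomp Require Import all_boot all_order all_algebra.
Set Implicit Arguments. Unset Strict Implicit. Unset Printing Implicit Defensive.
Import GRing.Theory.
Local Open Scope ring_scope.

Definition bform (K : fieldType) (nn : nat) (B : 'M[K]_nn) (x y : 'rV[K]_nn) : K :=
  (x *m B *m y^T) 0 0.

Definition perpmx (K : fieldType) (nn : nat) (B U : 'M[K]_nn) : 'M[K]_nn :=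
  kermx ((U *m B)^T).

Definition spanmx (K : fieldType) (nn : nat) (s : seq 'rV[K]_nn) : 'M[K]_nn :=
  (\sum_(x <- s) <<x>>)%MS.

Definition gpow (K : fieldType) (nn : nat) (g : 'M[K]_nn) (i : int) : 'M[K]_nn :=
  match i with Posz m => g ^+ m | Negz m => invmx g ^+ m.+1 end.

(* p_k (1-indexed) and p_{<r} *)
Definition pk (p : seq nat) (k : nat) : nat := nth 0%N p k.-1.
Definition plt (p : seq nat) (r : nat) : nat := sumn (take r.-1 p).

(* p_* : p_1 >= ... >= p_sigma >= 1 with sum n = (nn - kappa)/2 = nn./2 *)
Definition partition_of (p : seq nat) (nn : nat) : Prop :=
  sorted geq p /\ all (fun x => 0 < x)%N p /\ sumn p = nn./2.

Definition Zsp (K : fieldType) (nn : nat) (g : 'M[K]_nn) (v : nat -> 'rV[K]_nn)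
  (p : seq nat) (k : nat) : 'M[K]_nn :=
  spanmx [seq v k *m g ^+ j | j <- iota 0 (pk p k)].

(* X_r (r in [1,sigma]) = span of g^{-p_r+i} v_r, i in [0,2p_r-1];
   X_{sigma+1} = 0 if kappa = 0, k v_{sigma+1} if kappa = 1 (kappa = odd nn) *)
Definition Xsp (K : fieldType) (nn : nat) (g : 'M[K]_nn) (v : nat -> 'rV[K]_nn)
  (p : seq nat) (r : nat) : 'M[K]_nn :=
  if (r <= size p)%N then
    spanmx [seq v r *m gpow g (j%:Z - (pk p r)%:Z) | j <- iota 0 (2 * pk p r)]
  else if odd nn then <<v r>>%MS else 0.

Fixpoint wp_aux (p : seq nat) (off nn i : nat) : nat :=
  match p with
  | [::] => i
  | pr :: p' =>
    if (off < i <= off + pr)%N then (if i == (off + pr)%N then (nn - off)%N else i.+1)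
    else if (nn - off - pr < i <= nn - off)%N then
      (if i == (nn - off - pr).+1 then off.+1 else i.-1)
    else wp_aux p' (off + pr) nn i
  end.
Definition wp (p : seq nat) (nn : nat) (i : nat) : nat := wp_aux p 0 nn i.

(* j is in X_i  <->  V'_i \cap V_j <> V'_i \cap V_{j-1} *)
Definition jump (K : fieldType) (nn : nat) (Vf Vf' : nat -> 'M[K]_nn) (i j : nat) : bool :=
  ~~ ((Vf' i :&: Vf j) == (Vf' i :&: Vf j.-1))%MS.

(* a_{V_*,V'_*} = w : for i in [1,nn], X_i = X_{i-1} \sqcup {w i} (X_i subset of [1,nn]) *)
Definition relpos_is (K : fieldType) (nn : nat) (Vf Vf' : nat -> 'M[K]_nn)
  (w : nat -> nat) : Prop :=
  forall i, (1 <= i <= nn)%N ->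
    [/\ (1 <= w i <= nn)%N, ~~ jump Vf Vf' i.-1 (w i) &
        forall j, (1 <= j <= nn)%N -> jump Vf Vf' i j = jump Vf Vf' i.-1 j || (j == w i)].

Definition form_data (K : fieldType) (nn : nat) (B : 'M[K]_nn) (Q : 'rV[K]_nn -> K) : Prop :=
  (forall (a : K) x, Q (a *: x) = a ^+ 2 * Q x) /\
  ( [/\ (forall x, Q x = 0), (forall x, bform B x x = 0) & (perpmx B 1%:M == (0 : 'M[K]_nn))%MS ]
  \/ [/\ (exists x, Q x != 0),
         (forall x y, bform B x y = Q (x + y) - Q x - Q y) &
         (forall y z, (y <= perpmx B 1%:M)%MS -> (z <= perpmx B 1%:M)%MS ->
                      Q y = Q z -> y = z) ]).

Definition in_flagF (K : fieldType) (nn : nat) (B : 'M[K]_nn) (Q : 'rV[K]_nn -> K)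
  (Vf : nat -> 'M[K]_nn) : Prop :=
  [/\ (forall i, (i <= nn)%N -> \rank (Vf i) = i),
      (forall i, (i < nn)%N -> (Vf i <= Vf i.+1)%MS),
      (Vf 0%N == (0 : 'M[K]_nn))%MS, (Vf nn == 1%:M)%MS &
      (forall i, (i <= nn./2)%N ->
         (forall x, (x <= Vf i)%MS -> Q x = 0) /\ (perpmx B (Vf i) == Vf (nn - i)%N)%MS)].

Definition in_Is (K : fieldType) (nn : nat) (B : 'M[K]_nn) (Q : 'rV[K]_nn -> K)
  (g : 'M[K]_nn) : Prop :=
  [/\ g \in unitmx, (forall x y, bform B (x *m g) (y *m g) = bform B x y) &
      (forall x, Q (x *m g) = Q x)].

(* Lambda_k = sum_{r in [1,sigma+1]} max(2 p_r - k, 0), with 2 p_{sigma+1} = kappa *)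
Definition Lambda (p : seq nat) (nn k : nat) : nat :=
  (sumn [seq (2 * pr - k)%N | pr <- p] + (odd nn - k))%N.

From HB Require Import structures.
From mathcomp Require Import all_boot all_order all_algebra.
From mathcomp Require Import zify.
Import GRing.Theory.
Set Implicit Arguments. Unset Strict Implicit. Unset Printing Implicit Defensive.
Local Open Scope ring_scope.

(* The hypotheses on the v_r say that, for a suitable total order on the index pairs (t, j),
   the vectors g^(j - p_t) v_t pair with the vectors g^j' v_r through a triangular matrix with
   diagonal entries 1. Multiplying the left vectors by N^k = (g - 1)^k keeps the pairing
   triangular (with diagonal (-1)^k) as long as j + k < 2 p_t, so these Lambda_k vectors of N^k V
   are independent; the same argument inside a single X_r, with the two halves of its generators
   swapped, shows that X_r is nondegenerate, whence V = X_r (+) X_r^perp.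
   If dim N^k V = Lambda_k for all k, these vectors span N^k V. For k = 2 p_t the vector
   N^(2 p_t) g^(-p_t) v_t then lies in the orthogonal sum of the X_s, s < t, which by induction
   are g-stable, nondegenerate and pairwise orthogonal, and it is orthogonal to that sum; so it
   vanishes, i.e. the Krylov space X_t is g-stable. A g-stable X_s is orthogonal to all later X_t,
   and the case k = 1 shows in the same way that g fixes v_(sigma+1). *)

Section BilinearForm.
Variables (K : fieldType) (nn : nat) (B : 'M[K]_nn).
Implicit Types (x y z : 'rV[K]_nn) (U : 'M[K]_nn).

Lemma bformDl x y z : bform B (x + y) z = bform B x z + bform B y z.
Proof. by rewrite /bform !mulmxDl mxE. Qed.

Lemma bformDr x y z : bform B x (y + z) = bform B x y + bform B x z.
Proof. by rewrite /bform linearD /= mulmxDr mxE. Qed.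

Lemma bformBl x y z : bform B (x - y) z = bform B x z - bform B y z.
Proof. by rewrite /bform !mulmxBl !mxE. Qed.

Lemma gram_mxE m1 m2 (U : 'M_(m1, nn)) (Y : 'M_(m2, nn)) i j :
  (U *m B *m Y^T) i j = bform B (row i U) (row j Y).
Proof.
rewrite /bform !mxE; apply: eq_bigr => k _; rewrite !mxE.
by congr (_ * _); apply: eq_bigr => l _; rewrite mxE.
Qed.

Lemma sub_perpmxE m (Y : 'M_(m, nn)) U :
  (Y <= perpmx B U)%MS = (U *m B *m Y^T == 0).
Proof.
by apply/sub_kermxP/eqP => H; apply: trmx_inj; rewrite trmx0 -H trmx_mul trmxK.
Qed.

Lemma sub_perpmxP y U :
  reflect (forall x, (x <= U)%MS -> bform B x y = 0) (y <= perpmx B U)%MS.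
Proof.
rewrite sub_perpmxE; apply: (iffP eqP) => [UBy0 x /submxP [a ->] | Uy0].
  by rewrite /bform -2!mulmxA [U *m _]mulmxA UBy0 mulmx0 mxE.
apply/matrixP => i j; rewrite gram_mxE [RHS]mxE ord1.
by rewrite [row 0 y]row_id Uy0 ?row_sub.
Qed.

Lemma perpmxS U U' : (U <= U')%MS -> (perpmx B U' <= perpmx B U)%MS.
Proof.
move=> sUU'; apply/row_subP => i; apply/sub_perpmxP => x xU.
by have /sub_perpmxP := row_sub i (perpmx B U'); apply; apply: submx_trans sUU'.
Qed.

Lemma mxrank_perpmx U : (nn <= \rank U + \rank (perpmx B U))%N.
Proof.
rewrite /perpmx mxrank_ker mxrank_tr.
have := mxrankM_maxl U B; have := rank_leq_col (U *m B); lia.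
Qed.

End BilinearForm.

Section ReflexiveForm.
Variables (K : fieldType) (nn : nat) (B : 'M[K]_nn).
Hypothesis bform_eq0C : forall x y, bform B x y = 0 -> bform B y x = 0.

Lemma perpmxC (U Y : 'M[K]_nn) : (Y <= perpmx B U)%MS = (U <= perpmx B Y)%MS.
Proof.
suff sub_perpC V W : (W <= perpmx B V)%MS -> (V <= perpmx B W)%MS.
  by apply/idP/idP; apply: sub_perpC.
move=> WV; apply/row_subP => i; apply/sub_perpmxP => y yW; apply: bform_eq0C.
by move/sub_perpmxP: (submx_trans yW WV); apply; apply: row_sub.
Qed.

End ReflexiveForm.

Section Spans.
Variables (K : fieldType) (nn : nat).
Implicit Types (s : seq 'rV[K]_nn) (x y : 'rV[K]_nn).

Lemma mem_spanmx s x : x \in s -> (x <= spanmx s)%MS.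
Proof.
by move=> xs; rewrite /spanmx (big_rem x xs) /= (submx_trans _ (addsmxSl _ _)) ?genmxE.
Qed.

Lemma spanmx_subP m s (M : 'M[K]_(m, nn)) :
  reflect {in s, forall x, x <= M}%MS (spanmx s <= M)%MS.
Proof.
apply: (iffP idP) => [sM x xs | sM]; first exact: submx_trans (mem_spanmx xs) sM.
rewrite /spanmx big_seq; elim/big_rec: _ => [|x A xs AM]; first exact: sub0mx.
by rewrite addsmx_sub genmxE sM.
Qed.

Lemma sub_perpmx_spanmx (B : 'M[K]_nn) s y :
  {in s, forall x, bform B x y = 0} -> (y <= perpmx B (spanmx s))%MS.
Proof.
move=> sy; rewrite sub_perpmxE -mulmxA; apply/eqP/sub_kermxP/spanmx_subP => x xs.
by apply/sub_kermxP/matrixP => i j; rewrite !ord1 mulmxA [RHS]mxE; apply: sy.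
Qed.

End Spans.

Section OrthogonalSums.
Variables (K : fieldType) (nn : nat) (B : 'M[K]_nn) (I : finType) (P : pred I).
Variable A_ : I -> 'M[K]_nn.

Lemma sub_perpmx_sumsmx m (Y : 'M[K]_(m, nn)) :
  (forall i, P i -> Y <= perpmx B (A_ i))%MS -> (Y <= perpmx B (\sum_(i | P i) A_ i)%MS)%MS.
Proof.
move=> YA; have : (\sum_(i | P i) A_ i <= kermx (B *m Y^T))%MS.
  by apply/sumsmx_subP => i Pi; apply/sub_kermxP/eqP; rewrite mulmxA -sub_perpmxE YA.
by rewrite sub_perpmxE => /sub_kermxP; rewrite mulmxA => ->.
Qed.

Lemma sumsmx_nondeg :
  (forall i j, P i -> P j -> i != j -> A_ j <= perpmx B (A_ i))%MS ->
  (forall i, P i -> A_ i :&: perpmx B (A_ i) == (0 : 'M_nn))%MS ->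
  ((\sum_(i | P i) A_ i) :&: perpmx B (\sum_(i | P i) A_ i)%MS == (0 : 'M_nn))%MS.
Proof.
move=> A_orth A_nondeg; apply/eqmx0P/eqP/rowV0P => u; rewrite sub_capmx.
case/andP => /sub_sumsmxP [w_ uE] uperp; rewrite uE; apply: big1 => i Pi.
have /andP [capA0 _] := A_nondeg i Pi; apply/eqP; rewrite -submx0 (submx_trans _ capA0) //.
rewrite sub_capmx submxMl /=.
have -> : w_ i *m A_ i = u - \sum_(j | P j && (j != i)) w_ j *m A_ j.
  by rewrite uE (bigD1 i) //= addrK.
apply: addmx_sub; first exact: submx_trans uperp (perpmxS B (sumsmx_sup i Pi (submx_refl _))).
rewrite -scaleN1r; apply/scalemx_sub/summx_sub => j /andP [Pj ji].
by apply: submx_trans (submxMl _ _) (A_orth i j Pi Pj _); rewrite eq_sym.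
Qed.

End OrthogonalSums.

Section TriangularPairing.
Variables (K : fieldType) (nn : nat) (B : 'M[K]_nn) (I : eqType) (le : rel I).
Variables (f h : I -> 'rV[K]_nn) (s : seq I).
Hypotheses (s_uniq : uniq s) (le_total : {in s &, total le}).
Hypotheses (le_trans : {in s & &, transitive le}) (le_anti : {in s &, antisymmetric le}).
Hypothesis pairing_trig : {in s &, forall i j, bform B (f i) (h j) != 0 -> le i j}.
Hypothesis pairing_diag : {in s, forall i, bform B (f i) (h i) != 0}.

Definition rowsmx (F : I -> 'rV[K]_nn) (r : seq I) : 'M[K]_(size r, nn) :=
  \matrix_(k < size r) F (tnth (in_tuple r) k).

Lemma rowsmx_spanmx F r : (rowsmx F r :=: spanmx [seq F i | i <- r])%MS.
Proof.
apply/eqmxP/andP; split.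
  by apply/row_subP => k; rewrite rowK mem_spanmx // map_f ?mem_tnth.
apply/spanmx_subP => _ /mapP [i ir ->].
by have [k ->] := tnthP (in_tuple r) i ir; apply: (eq_row_sub k); rewrite rowK.
Qed.

Local Notation s' := (sort le s).

Lemma spanmx_sort (F : I -> 'rV[K]_nn) : spanmx [seq F i | i <- s'] = spanmx [seq F i | i <- s].
Proof. by apply: perm_big; rewrite perm_map // perm_sort. Qed.

Lemma gram_unit : rowsmx f s' *m B *m (rowsmx h s')^T \in unitmx.
Proof.
set G := _ *m _ *m _; set t := in_tuple s'.
have mem_t k : tnth t k \in s by rewrite -(mem_sort le) mem_tnth.
have Gij i j : G i j = bform B (f (tnth t i)) (h (tnth t j)).
  by rewrite gram_mxE !rowK.
rewrite unitmxE -det_tr det_trig.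
  by rewrite unitfE; apply/prodf_neq0 => i _; rewrite mxE Gij; apply: pairing_diag.
apply/is_trig_mxP => i j lt_ij; rewrite mxE Gij.
have [//|nz] := eqVneq (bform B (f (tnth t j)) (h (tnth t i))) 0.
have le_ji := pairing_trig (mem_t j) (mem_t i) nz.
have x0 : I := tnth t i.
have le_ij : le (tnth t i) (tnth t j).
  have all_t : all (mem s) s' by apply/allP => z; rewrite mem_sort.
  have sorted_t := @sort_sorted_in _ [pred x in s] le le_total s (allss s).
  by rewrite !(tnth_nth x0); apply: (sorted_ltn_nth_in le_trans _ all_t); rewrite ?inE.
have /eqP := le_anti (mem_t i) (mem_t j) (introT andP (conj le_ij le_ji)).
by rewrite !(tnth_nth x0) nth_uniq ?size_tuple ?sort_uniq // (ltn_eqF lt_ij).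
Qed.

Lemma mxrank_spanmx_trig : \rank (spanmx [seq f i | i <- s]) = size s.
Proof.
rewrite -spanmx_sort -(rowsmx_spanmx f s') -[RHS](size_sort le).
apply/eqP; rewrite eqn_leq rank_leq_row /= -{1}(mxrank_unit gram_unit).
exact: leq_trans (mxrankM_maxl _ _) (mxrankM_maxl _ _).
Qed.

Lemma trig_pairing_eq0 x : (x <= spanmx [seq f i | i <- s])%MS ->
  {in s, forall i, bform B x (h i) = 0} -> x = 0.
Proof.
rewrite -spanmx_sort -(rowsmx_spanmx f s') => /submxP [c ->] xh0.
suff -> : c = 0 by rewrite mul0mx.
set G := rowsmx f s' *m B *m (rowsmx h s')^T.
have : c *m G = 0.
  apply/rowP => j; rewrite !mulmxA gram_mxE row_id rowK [RHS]mxE.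
  by rewrite xh0 // -(mem_sort le) mem_tnth.
by move/(congr1 (mulmx^~ (invmx G))); rewrite mulmxK ?gram_unit // mul0mx.
Qed.

End TriangularPairing.

Section Isometry.
Variables (K : fieldType) (nn : nat) (g : 'M[K]_nn).
Hypothesis g_unit : g \in unitmx.

Lemma gpowD a b : gpow g (a + b) = gpow g a *m gpow g b.
Proof.
case: nn g g_unit => [|n] h h_unit; first by rewrite [LHS]thinmx0 [RHS]thinmx0.
have gpowE i : gpow h i = h ^ i by case: i => // m; rewrite /gpow /exprz -exprVn.
by rewrite !gpowE mulmxE exprzDr.
Qed.

Lemma stablemx_invmx (V : 'M[K]_nn) : stablemx V g -> stablemx V (invmx g).
Proof.
move=> Vg; have rVg : \rank (V *m g) = \rank V by rewrite mxrankMfree ?row_free_unit.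
have /(submxMr (invmx g)) : (V <= V *m g)%MS.
  by have [_ <-] := mxrank_leqif_sup Vg; rewrite rVg.
by rewrite mulmxK.
Qed.

Lemma stablemx_expr (V : 'M[K]_nn) (h : 'M[K]_nn) k : stablemx V h -> stablemx V (h ^+ k).
Proof.
move=> Vh; elim: k => [|k IH]; first by rewrite expr0 stablemxC.
by rewrite exprSr -mulmxE stablemxM.
Qed.

Lemma stablemx_gpow (V : 'M[K]_nn) i : stablemx V g -> stablemx V (gpow g i).
Proof.
by move=> Vg; case: i => m; apply: stablemx_expr; rewrite ?stablemx_invmx.
Qed.

Lemma stablemx_subr1 (V : 'M[K]_nn) k : stablemx V g -> stablemx V ((g - 1%:M) ^+ k).
Proof. by move=> Vg; apply/stablemx_expr/stablemxD; rewrite ?stablemxN ?stablemxC. Qed.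

Variable B : 'M[K]_nn.
Hypothesis g_iso : forall x y, bform B (x *m g) (y *m g) = bform B x y.

Lemma bform_gpow i x y : bform B (x *m gpow g i) (y *m gpow g i) = bform B x y.
Proof.
suff iso_expr m u w : bform B (u *m g ^+ m) (w *m g ^+ m) = bform B u w.
  case: i => m; first exact: iso_expr.
  rewrite -(iso_expr m.+1) -!mulmxA -[g ^+ m.+1]/(gpow g m.+1) -gpowD.
  by rewrite NegzE addNr !mulmx1.
elim: m u w => [|m IH] u w; first by rewrite !expr0 !mulmx1.
by rewrite exprSr -!mulmxE !mulmxA g_iso IH.
Qed.

Lemma bform_gpow_shift a b x y :
  bform B (x *m gpow g a) (y *m gpow g b) = bform B (x *m gpow g (a - b)) y.
Proof. by rewrite -[RHS](bform_gpow b) -mulmxA -gpowD subrK. Qed.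

Lemma bform_gpow_move a x y : bform B (x *m gpow g a) y = bform B x (y *m gpow g (- a)).
Proof. by rewrite -[x in RHS]mulmx1 -[1%:M]/(gpow g 0) bform_gpow_shift sub0r opprK. Qed.

Lemma stablemx_perpmx (V : 'M[K]_nn) : stablemx V g -> stablemx (perpmx B V) g.
Proof.
move=> Vg; apply/row_subP => i; rewrite row_mul; apply/sub_perpmxP => x xV.
rewrite -(mulmxKV g_unit x) g_iso.
have /sub_perpmxP := row_sub i (perpmx B V); apply.
exact: submx_trans (submxMr _ xV) (stablemx_invmx Vg).
Qed.

End Isometry.

Section Krylov.
Variables (K : fieldType) (nn : nat) (w : 'rV[K]_nn) (g : 'M[K]_nn).

Definition krylovmx m := spanmx [seq w *m g ^+ j | j <- iota 0 m].

Lemma krylovmxSr m : krylovmx m.+1 = (krylovmx m + <<w *m g ^+ m>>)%MS.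
Proof. by rewrite /krylovmx /spanmx -[m.+1]addn1 iotaD map_cat big_cat big_seq1. Qed.

Lemma krylovmx_mul m : (krylovmx m *m g <= krylovmx m.+1)%MS.
Proof.
rewrite {1}/krylovmx /spanmx big_map big_seq.
elim/big_rec: _ => [|j A]; first by rewrite mul0mx sub0mx.
rewrite mem_iota add0n => /andP [_ ltjm] AgS; rewrite addsmxMr addsmx_sub AgS andbT.
rewrite (eqmxMr _ (genmxE _)) -mulmxA mulmxE -exprSr; apply: mem_spanmx.
by apply/mapP; exists j.+1; rewrite // mem_iota ltnS.
Qed.

Lemma krylovmx_subr1 m : (w *m (g - 1%:M) ^+ m - w *m g ^+ m <= krylovmx m)%MS.
Proof.
elim: m => [|m IH]; first by rewrite !expr0 subrr sub0mx.
set z := w *m (g - 1%:M) ^+ m - w *m g ^+ m in IH *.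
have -> : w *m (g - 1%:M) ^+ m.+1 - w *m g ^+ m.+1 = z *m g - z - w *m g ^+ m.
  rewrite /z !exprSr -!mulmxE !mulmxA mulmxBr mulmx1 !mulmxBl.
  by rewrite opprB [in RHS]addrA [in RHS]addrAC addrK [in RHS]addrAC.
apply: addmx_sub; first apply: addmx_sub.
- exact: submx_trans (submxMr _ IH) (krylovmx_mul m).
- by rewrite eqmx_opp (submx_trans IH) // krylovmxSr addsmxSl.
by rewrite eqmx_opp krylovmxSr (submx_trans _ (addsmxSr _ _)) ?genmxE.
Qed.

Lemma stablemx_krylovmx m : w *m (g - 1%:M) ^+ m = 0 -> stablemx (krylovmx m) g.
Proof.
move=> wN0; apply: submx_trans (krylovmx_mul m) _.
rewrite krylovmxSr addsmx_sub submx_refl genmxE.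
by have := krylovmx_subr1 m; rewrite wN0 sub0r eqmx_opp.
Qed.

End Krylov.

Definition Nk_index (p : seq nat) (k : nat) : seq (nat * nat) :=
  [seq (t, j) | t <- iota 1 (size p), j <- iota 0 (2 * pk p t - k)].

Lemma Nk_index_uniq p k : uniq (Nk_index p k).
Proof.
apply: allpairs_uniq_dep => [||[t1 j1] [t2 j2] _ _ /= [-> ->]] //; first exact: iota_uniq.
by move=> t _; apply: iota_uniq.
Qed.

Lemma mem_Nk_index p k t j :
  ((t, j) \in Nk_index p k) = (1 <= t <= size p)%N && (j + k < 2 * pk p t)%N.
Proof.
apply/allpairsPdep/andP => [[t' [j' [+ + [-> ->]]]]|[tp ltjk]].
  by rewrite !mem_iota /=; lia.
by exists t, j; rewrite !mem_iota; split => //; lia.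
Qed.

Lemma size_Nk_index p k : size (Nk_index p k) = sumn [seq (2 * pr - k)%N | pr <- p].
Proof.
rewrite /Nk_index size_allpairs_dep -[in RHS](mkseq_nth 0 p) /mkseq -map_comp.
rewrite -[1%N]/(1 + 0)%N iotaDl -map_comp; congr sumn; apply: eq_map => t /=.
by rewrite size_iota /pk add1n.
Qed.

(* (t, j) stands for g^(j - p_t) v_t; pairs are ordered by the exponent j - p_t, ties being
   broken by decreasing t. *)
Definition gen_le (p : seq nat) (x y : nat * nat) : bool :=
  (x.2 + pk p y.1 < y.2 + pk p x.1)%N || (x.2 + pk p y.1 == y.2 + pk p x.1) && (y.1 <= x.1)%N.

Lemma gen_le_total p : total (gen_le p).
Proof. by move=> [t j] [r j']; rewrite /gen_le /=; lia. Qed.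

Lemma gen_le_trans p : transitive (gen_le p).
Proof. by move=> [t j] [r j'] [s i]; rewrite /gen_le /=; lia. Qed.

Lemma gen_le_anti p : antisymmetric (gen_le p).
Proof.
move=> [t j] [r j']; rewrite /gen_le /= => le_tr.
have etr : t = r by lia.
by subst r; have -> : j = j' by lia.
Qed.

Section JordanBlocks.
Variables (K : fieldType) (nn : nat) (B g : 'M[K]_nn) (v : nat -> 'rV[K]_nn) (p : seq nat).
Hypotheses (g_unit : g \in unitmx) (g_iso : forall x y, bform B (x *m g) (y *m g) = bform B x y).
Hypothesis bform_eq0C : forall x y, bform B x y = 0 -> bform B y x = 0.
Hypothesis pk_le : forall t r, (1 <= t <= r)%N -> (r <= size p)%N -> (pk p r <= pk p t)%N.
Hypothesis pk_gt0 : forall t, (1 <= t <= size p)%N -> (0 < pk p t)%N.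
Hypothesis v_cross : forall t r, (1 <= t)%N -> (t < r)%N -> (r <= size p)%N ->
  forall i : int, - (pk p t)%:Z <= i <= (pk p t)%:Z - 1 -> bform B (v t *m gpow g i) (v r) = 0.
Hypothesis v_self : forall r, (1 <= r <= size p)%N ->
  forall i : int, `|i| <= (pk p r)%:Z - 1 -> bform B (v r) (v r *m gpow g i) = 0.
Hypothesis v_dual : forall r, (1 <= r <= size p)%N -> bform B (v r) (v r *m g ^+ pk p r) = 1.
Hypothesis v_last : odd nn -> forall t, (1 <= t <= size p)%N ->
  forall i : int, - (pk p t)%:Z <= i <= (pk p t)%:Z - 1 ->
  bform B (v t *m gpow g i) (v (size p).+1) = 0.

Local Notation N := (g - 1%:M).
Local Notation X := (Xsp g v p).
Let bform_shift := bform_gpow_shift g_unit g_iso.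
Let bform_move := bform_gpow_move g_unit g_iso.

Definition Xgen t j := v t *m gpow g (j%:Z - (pk p t)%:Z).

Lemma XgenE t j : Xgen t j = Xgen t 0 *m g ^+ j.
Proof. by rewrite /Xgen -mulmxA -[g ^+ j]/(gpow g j) -gpowD // sub0r addrC. Qed.

Lemma XgenSr t j : Xgen t j *m g = Xgen t j.+1.
Proof. by rewrite [Xgen t j.+1]XgenE exprSr -mulmxE mulmxA -XgenE. Qed.

Lemma Xsp_krylov t : (t <= size p)%N -> X t = krylovmx (Xgen t 0) g (2 * pk p t).
Proof. by move=> tp; rewrite /Xsp tp; congr spanmx; apply: eq_map => j; rewrite -XgenE. Qed.

Lemma Xgen_sub t j : (t <= size p)%N -> (j < 2 * pk p t)%N -> (Xgen t j <= X t)%MS.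
Proof.
by move=> tp ltj; rewrite /Xsp tp mem_spanmx //; apply/mapP; exists j; rewrite ?mem_iota.
Qed.

Lemma bform_Xgen t i j :
  bform B (Xgen t i) (Xgen t j) = bform B (v t) (v t *m gpow g (j%:Z - i%:Z)).
Proof. by rewrite /Xgen bform_shift opprB addrA subrK bform_move opprB. Qed.

Lemma Xgen_pairing_trig t j r j' : (1 <= t <= size p)%N -> (j < 2 * pk p t)%N ->
  (1 <= r <= size p)%N -> bform B (Xgen t j) (v r *m g ^+ j') != 0 -> gen_le p (t, j) (r, j').
Proof.
move=> /andP [t1 tp] ltj /andP [r1 rp]; rewrite /gen_le /=.
rewrite /Xgen -[g ^+ j']/(gpow g j') bform_shift.
case: (ltngtP t r) => [lt_tr | lt_rt | <-] nz.
- have := pk_le (introT andP (conj t1 (ltnW lt_tr))) rp.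
  have : ~~ (- (pk p t)%:Z <= j%:Z - (pk p t)%:Z - j'%:Z <= (pk p t)%:Z - 1).
    by apply: contra nz => range; rewrite v_cross.
  lia.
- have := pk_le (introT andP (conj r1 (ltnW lt_rt))) tp.
  have : ~~ (- (pk p r)%:Z <= - (j%:Z - (pk p t)%:Z - j'%:Z) <= (pk p r)%:Z - 1).
    by apply: contra nz => range; rewrite bform_move; apply/eqP/bform_eq0C/v_cross.
  lia.
- have : ~~ (`|- (j%:Z - (pk p t)%:Z - j'%:Z)| <= (pk p t)%:Z - 1).
    by apply: contra nz => range; rewrite bform_move v_self ?t1.
  lia.
Qed.

Lemma Xgen_mulN t j : Xgen t j *m N = Xgen t j.+1 - Xgen t j.
Proof. by rewrite mulmxBr mulmx1 XgenSr. Qed.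

Lemma Xgen_Nk_pairing_trig k t j r j' : (1 <= t <= size p)%N -> (j + k < 2 * pk p t)%N ->
  (1 <= r <= size p)%N -> bform B (Xgen t j *m N ^+ k) (v r *m g ^+ j') != 0 ->
  gen_le p (t, j) (r, j').
Proof.
move=> tp + rp; elim: k j => [|k IH] j ltjk.
  by rewrite expr0 mulmx1; apply: Xgen_pairing_trig; rewrite // -(addn0 j).
rewrite exprS -mulmxE mulmxA Xgen_mulN mulmxBl bformBl.
have [z1 | nz1] := eqVneq (bform B (Xgen t j.+1 *m N ^+ k) (v r *m g ^+ j')) 0.
  by rewrite z1 sub0r oppr_eq0; apply: IH; lia.
move=> _; apply: gen_le_trans (IH j.+1 _ nz1); last by lia.
by rewrite /gen_le /=; lia.
Qed.

Lemma Xgen_Nk_pairing_diag k t j : (1 <= t <= size p)%N -> (j + k < 2 * pk p t)%N ->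
  bform B (Xgen t j *m N ^+ k) (v t *m g ^+ j) = (-1) ^+ k.
Proof.
move=> tp; elim: k j => [|k IH] j ltjk.
  rewrite expr0 mulmx1 /Xgen -[g ^+ j]/(gpow g j) bform_shift addrAC subrr add0r.
  by rewrite bform_move opprK v_dual.
rewrite exprS -mulmxE mulmxA Xgen_mulN mulmxBl bformBl IH; last by lia.
have [z | nz] := eqVneq (bform B (Xgen t j.+1 *m N ^+ k) (v t *m g ^+ j)) 0.
  by rewrite z sub0r exprS mulN1r.
by have := Xgen_Nk_pairing_trig tp _ tp nz; rewrite /gen_le /=; lia.
Qed.

Definition Nk_span k := spanmx [seq Xgen x.1 x.2 *m N ^+ k | x <- Nk_index p k].

Lemma mxrank_Nk_span k : \rank (Nk_span k) = size (Nk_index p k).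
Proof.
apply: (mxrank_spanmx_trig (le := gen_le p) (h := fun x => v x.1 *m g ^+ x.2)).
- exact: Nk_index_uniq.
- by move=> x y _ _; apply: gen_le_total.
- by move=> x y z _ _ _; apply: gen_le_trans.
- by move=> x y _ _; apply: gen_le_anti.
- move=> [t j] [r j']; rewrite !mem_Nk_index => /andP [tp ltj] /andP [rp _].
  exact: Xgen_Nk_pairing_trig.
- move=> [t j]; rewrite mem_Nk_index => /andP [tp ltj] /=.
  by rewrite Xgen_Nk_pairing_diag // signr_eq0.
Qed.

Lemma Nk_span_sub k : (Nk_span k <= N ^+ k)%MS.
Proof. by apply/spanmx_subP => _ /mapP [x _ ->]; apply: submxMl. Qed.

Lemma mxrank_Nk_ge k : (size (Nk_index p k) <= \rank (N ^+ k))%N.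
Proof. by rewrite -mxrank_Nk_span mxrankS ?Nk_span_sub. Qed.

Lemma Nk_sub_span k : \rank (N ^+ k) = size (Nk_index p k) -> (N ^+ k <= Nk_span k)%MS.
Proof.
by move=> rkN; have [_ <-] := mxrank_leqif_sup (Nk_span_sub k); rewrite mxrank_Nk_span rkN.
Qed.

(* Inside X_r, Xgen r i pairs nontrivially with Xgen r (half_swap P i), and the pairing is
   triangular for the order induced by block_key. *)
Definition half_swap P i := if (i < P)%N then (i + P)%N else (i - P)%N.
Definition block_key P j := if (j < P)%N then j else (3 * P - 1 - j)%N.

Lemma Xgen_swap_pairing_trig r i j : (1 <= r <= size p)%N ->
  (i < 2 * pk p r)%N -> (j < 2 * pk p r)%N ->
  bform B (Xgen r i) (Xgen r (half_swap (pk p r) j)) != 0 ->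
  (block_key (pk p r) i <= block_key (pk p r) j)%N.
Proof.
move=> rp lti ltj; rewrite bform_Xgen => nz.
have : ~~ (`|(half_swap (pk p r) j)%:Z - i%:Z| <= (pk p r)%:Z - 1).
  by apply: contra nz => range; rewrite v_self.
by rewrite /half_swap /block_key; case: (ltnP i (pk p r)); case: (ltnP j (pk p r)); lia.
Qed.

Lemma Xgen_swap_pairing_diag r i : (1 <= r <= size p)%N ->
  bform B (Xgen r i) (Xgen r (half_swap (pk p r) i)) != 0.
Proof.
move=> rp; rewrite bform_Xgen /half_swap; case: ltnP => lti.
  by rewrite PoszD addrAC subrr add0r v_dual ?oner_neq0.
have -> : (i - pk p r)%N%:Z - i%:Z = - (pk p r)%:Z by lia.
rewrite -bform_move; apply/eqP => /bform_eq0C.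
by rewrite v_dual // => /eqP; rewrite oner_eq0.
Qed.

Lemma Xsp_nondeg r : (1 <= r <= size p)%N -> (X r :&: perpmx B (X r) == (0 : 'M_nn))%MS.
Proof.
move=> rp; have [_ rS] := andP rp; set P := pk p r.
apply/eqmx0P/eqP/rowV0P => x; rewrite sub_capmx => /andP [xX xperp].
have Xr : X r = spanmx [seq Xgen r j | j <- iota 0 (2 * P)] by rewrite /Xsp rS.
rewrite Xr in xX.
apply: (trig_pairing_eq0 (B := B) (le := fun i j => (block_key P i <= block_key P j)%N)
  (f := Xgen r) (h := fun i => Xgen r (half_swap P i)) _ _ _ _ _ _ xX).
- exact: iota_uniq.
- by move=> i j _ _; apply: leq_total.
- by move=> i j k _ _ _; apply: leq_trans.
- move=> i j; rewrite !mem_iota /block_key => /andP [_ lti] /andP [_ ltj].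
  by case: (ltnP i P); case: (ltnP j P); lia.
- by move=> i j; rewrite !mem_iota => /andP [_ lti] /andP [_ ltj]; apply: Xgen_swap_pairing_trig.
- by move=> i _; apply: Xgen_swap_pairing_diag.
move=> i; rewrite mem_iota => /andP [_ lti]; apply: bform_eq0C.
move/sub_perpmxP: xperp; apply; apply: Xgen_sub => //.
by rewrite /half_swap -/P; case: (ltnP i P); lia.
Qed.

Lemma Xsp_perpmx_full r : (1 <= r <= size p)%N -> (X r + perpmx B (X r) == 1%:M)%MS.
Proof.
move=> rp; rewrite /eqmx submx1 sub1mx /row_full eqn_leq rank_leq_col /=.
have := mxrank_sum_cap (X r) (perpmx B (X r)); have := mxrank_perpmx B (X r).
by move/eqmx0P: (Xsp_nondeg rp) => ->; rewrite mxrank0; lia.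
Qed.

Lemma Xsp_perpmx t r : (1 <= t)%N -> (t < r)%N -> (r <= size p)%N -> stablemx (X t) g ->
  (X r <= perpmx B (X t))%MS.
Proof.
move=> t1 ltr rp Xtg; have tp : (t <= size p)%N by lia.
have vr_perp : (v r <= perpmx B (X t))%MS.
  rewrite /Xsp tp; apply: sub_perpmx_spanmx => x /mapP [j]; rewrite mem_iota => /andP [_ ltj] ->.
  by apply: v_cross => //; lia.
rewrite {1}/Xsp rp; apply/spanmx_subP => _ /mapP [j _ ->].
exact: submx_trans (submxMr _ vr_perp) (stablemx_gpow g_unit _ (stablemx_perpmx g_unit g_iso Xtg)).
Qed.

Definition Xsum t := (\sum_(s < t | (0 < s)%N) X s)%MS.

Lemma stablemx_Xsum t : (forall s, (0 < s < t)%N -> stablemx (X s) g) -> stablemx (Xsum t) g.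
Proof.
move=> Xg; rewrite /Xsum sumsmxMr; apply/sumsmx_subP => s s0.
by apply: submx_trans (Xg s _) (sumsmx_sup s s0 (submx_refl _)); rewrite s0 ltn_ord.
Qed.

Lemma Xsum_nondeg t : (t <= (size p).+1)%N -> (forall s, (0 < s < t)%N -> stablemx (X s) g) ->
  (Xsum t :&: perpmx B (Xsum t) == (0 : 'M_nn))%MS.
Proof.
move=> tp Xg; apply: sumsmx_nondeg => [i j i0 j0 ij | i i0].
  have Xg' (s : 'I_t) : (0 < s)%N -> stablemx (X s) g by move=> s0; rewrite Xg // s0 ltn_ord.
  case: (ltngtP i j) => [lt_ij | lt_ji | /val_inj eij]; last by rewrite eij eqxx in ij.
    by apply: (Xsp_perpmx i0 lt_ij _ (Xg' i i0)); have := ltn_ord j; lia.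
  by rewrite perpmxC //; apply: (Xsp_perpmx j0 lt_ji _ (Xg' j j0)); have := ltn_ord i; lia.
by apply: Xsp_nondeg; rewrite i0 /=; have := ltn_ord i; lia.
Qed.

Lemma Xsp_perp_Xsum t : (1 <= t <= size p)%N -> (forall s, (0 < s < t)%N -> stablemx (X s) g) ->
  (X t <= perpmx B (Xsum t))%MS.
Proof.
move=> /andP [_ tp] Xg; apply: sub_perpmx_sumsmx => s s0.
by apply: Xsp_perpmx => //; rewrite Xg // s0 ltn_ord.
Qed.

Lemma perp_Xsum_Nk_eq0 t k (y : 'rV[K]_nn) : (t <= (size p).+1)%N ->
  (forall s, (0 < s < t)%N -> stablemx (X s) g) -> \rank (N ^+ k) = size (Nk_index p k) ->
  {in Nk_index p k, forall x, x.1 < t}%N -> (y <= perpmx B (Xsum t))%MS -> y *m N ^+ k = 0.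
Proof.
move=> tp Xg rkN idx_lt yperp; have /eqmx0P cap0 := Xsum_nondeg tp Xg.
apply/eqP; rewrite -submx0 -cap0 sub_capmx; apply/andP; split.
  apply: submx_trans (submxMl y _) (submx_trans (Nk_sub_span rkN) _).
  apply/spanmx_subP => _ /mapP [[s j] sj ->]; have /= lt_st := idx_lt _ sj.
  move: sj; rewrite mem_Nk_index => /andP [/andP [s1 sp] ltj].
  apply: (sumsmx_sup (Ordinal lt_st)) => //=.
  apply: submx_trans (submxMr _ (Xgen_sub sp _)) (stablemx_subr1 _ (Xg s _)); last by rewrite s1.
  by lia.
have perp_g := stablemx_perpmx g_unit g_iso (stablemx_Xsum Xg).
exact: submx_trans (submxMr _ yperp) (stablemx_subr1 _ perp_g).
Qed.

Section EqualRanks.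
Hypothesis rank_Nk : forall k, (0 < k)%N -> \rank (N ^+ k) = size (Nk_index p k).

Lemma Xsp_stable t : (1 <= t <= size p)%N -> stablemx (X t) g.
Proof.
elim/ltn_ind: t => t IH tp; have [t1 tS] := andP tp; have pt0 := pk_gt0 tp.
have Xg s : (0 < s < t)%N -> stablemx (X s) g by case/andP => s0 st; apply: IH => //; lia.
rewrite Xsp_krylov //; apply: stablemx_krylovmx.
apply: (perp_Xsum_Nk_eq0 _ Xg (rank_Nk _)); [lia | lia | |].
  (* a generator of N^(2 p_t) V comes from a block with p_s > p_t, hence s < t *)
  move=> [s j]; rewrite mem_Nk_index => /andP [/andP [s1 sp] ltj] /=.
  rewrite ltnNge; apply/negP => ts; have := pk_le (introT andP (conj t1 ts)) sp; lia.
apply: submx_trans (Xgen_sub tS _) (Xsp_perp_Xsum tp Xg); lia.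
Qed.

Lemma v_last_perp t : odd nn -> (1 <= t <= size p)%N -> (v (size p).+1 <= perpmx B (X t))%MS.
Proof.
move=> nn_odd tp; have [_ tS] := andP tp; rewrite /Xsp tS.
apply: sub_perpmx_spanmx => x /mapP [j]; rewrite mem_iota => /andP [_ ltj] ->.
by apply: v_last => //; lia.
Qed.

Lemma Xsp_last_stable : stablemx (X (size p).+1) g.
Proof.
rewrite /Xsp ltnn; case: ifP => nn_odd; last exact: stable0mx.
rewrite (eqmxMr _ (genmxE _)) genmxE.
have Xg s : (0 < s < (size p).+1)%N -> stablemx (X s) g by move=> sp; apply: Xsp_stable.
have : v (size p).+1 *m N ^+ 1 = 0.
  apply: (perp_Xsum_Nk_eq0 _ Xg (rank_Nk _)) => //; last rewrite /Xsum.
    by move=> [s j]; rewrite mem_Nk_index => /andP [/andP [_ sp] _].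
  by apply: sub_perpmx_sumsmx => s s0; apply: v_last_perp; rewrite // s0 -ltnS ltn_ord.
by rewrite expr1 mulmxBr mulmx1 => /eqP; rewrite subr_eq0 => /eqP ->.
Qed.

Lemma Xsp_perpmx_last r : (1 <= r <= size p)%N -> (X (size p).+1 <= perpmx B (X r))%MS.
Proof.
move=> rp; rewrite {1}/Xsp ltnn; case: ifP => nn_odd; last exact: sub0mx.
by rewrite genmxE v_last_perp.
Qed.

Lemma Xsp_orthogonal r r' : (1 <= r <= (size p).+1)%N -> (1 <= r' <= (size p).+1)%N -> r != r' ->
  X r *m B *m (X r')^T = 0.
Proof.
suff lt_perp s s' : (1 <= s)%N -> (s < s' <= (size p).+1)%N -> (X s' <= perpmx B (X s))%MS.
  move=> /andP [r1 rp] /andP [r'1 r'p] nrr'; apply/eqP; rewrite -sub_perpmxE.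
  case: (ltngtP r r') => [lt_rr' | lt_r'r | err]; last by rewrite err eqxx in nrr'.
    by rewrite lt_perp ?lt_rr'.
  by rewrite perpmxC // lt_perp ?lt_r'r.
move=> s1 /andP [lt_ss' s'p]; have sp : (s <= size p)%N by lia.
case: (ltnP s' (size p).+1) => s'S.
  have s'p' : (s' <= size p)%N by lia.
  by apply: (Xsp_perpmx s1 lt_ss' s'p'); apply: Xsp_stable; rewrite s1.
have -> : s' = (size p).+1 by lia.
by apply: Xsp_perpmx_last; rewrite s1.
Qed.

End EqualRanks.

Theorem Xsp_decomposition :
  [/\ forall r, (1 <= r <= size p)%N ->
        (X r :&: perpmx B (X r) == (0 : 'M_nn))%MS /\ (X r + perpmx B (X r) == 1%:M)%MS,
      forall k, (size (Nk_index p k) <= \rank (N ^+ k))%N &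
      (forall k, (0 < k)%N -> \rank (N ^+ k) = size (Nk_index p k)) ->
        (forall r, (1 <= r <= (size p).+1)%N -> stablemx (X r) g) /\
        (forall r r', (1 <= r <= (size p).+1)%N -> (1 <= r' <= (size p).+1)%N -> r != r' ->
           X r *m B *m (X r')^T = 0)].
Proof.
split=> [r rp | k | rkN]; first by split; [apply: Xsp_nondeg | apply: Xsp_perpmx_full].
  exact: mxrank_Nk_ge.
split=> [r /andP [r1 rp] | r r']; last exact: Xsp_orthogonal.
case: (ltnP r (size p).+1) => ltr; first by apply: Xsp_stable; rewrite // r1 -ltnS.
have -> : r = (size p).+1 by lia.
exact: Xsp_last_stable.
Qed.

End JordanBlocks.

Lemma form_data_bform_eq0C (K : fieldType) nn (B : 'M[K]_nn) Q :
  form_data B Q -> forall x y, bform B x y = 0 -> bform B y x = 0.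
Proof.
case=> _ [[_ alt _] | [_ polar _]] x y xy0.
  by move: (alt (x + y)); rewrite bformDl !bformDr !alt xy0 !add0r addr0.
by rewrite polar [y + x]addrC addrAC -polar.
Qed.

Lemma partition_pk p nn : partition_of p nn ->
  (forall t r, (1 <= t <= r)%N -> (r <= size p)%N -> (pk p r <= pk p t)%N) /\
  (forall t, (1 <= t <= size p)%N -> (0 < pk p t)%N).
Proof.
case=> p_sorted [p_pos _]; split => [t r /andP [t1 tr] rp | t /andP [t1 tp]]; rewrite /pk.
  apply: (sorted_leq_nth (rev_trans leq_trans) leqnn 0 p_sorted); rewrite ?inE; lia.
by move/all_nthP: p_pos; apply; lia.
Qed.

Lemma Lambda0 p nn : sumn p = nn./2 -> Lambda p nn 0 = nn.
Proof.
move=> sum_p; rewrite /Lambda subn0 -[in RHS](odd_double_half nn) -sum_p addnC.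
by congr (_ + _)%N; elim: p {sum_p} => //= a p ->; rewrite subn0 doubleD mul2n.
Qed.

Lemma LambdaS p nn k : Lambda p nn k.+1 = size (Nk_index p k.+1).
Proof. by rewrite /Lambda size_Nk_index; case: (odd nn); rewrite addn0. Qed.

Theorem mainTheorem6 (K : closedFieldType) (nn : nat) (hn : (3 <= nn)%N)
  (B : 'M[K]_nn) (Q : 'rV[K]_nn -> K) (hform : form_data B Q)
  (Vf Vf' : nat -> 'M[K]_nn) (hF : in_flagF B Q Vf) (hF' : in_flagF B Q Vf')
  (p : seq nat) (hp : partition_of p nn)
  (hrel : relpos_is Vf Vf' (wp p nn))
  (g : 'M[K]_nn) (hg : in_Is B Q g)
  (hgV : forall i, (i <= nn)%N -> (Vf i *m g == Vf' i)%MS)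
  (v : nat -> 'rV[K]_nn)
  (hV : forall r, (1 <= r <= size p)%N -> forall i, (i <= pk p r)%N ->
          (Vf (plt p r + i)%N ==
             (\sum_(1 <= k < r) Zsp g v p k) + spanmx [seq v r *m g ^+ j | j <- iota 0 i])%MS)
  (hcross : forall t r, (1 <= t)%N -> (t < r)%N -> (r <= size p)%N ->
          forall i : int, - (pk p t)%:Z <= i <= (pk p t)%:Z - 1 ->
          bform B (v t *m gpow g i) (v r) = 0)
  (hself : forall r, (1 <= r <= size p)%N ->
          [/\ (forall i : int, `|i| <= (pk p r)%:Z - 1 -> bform B (v r) (v r *m gpow g i) = 0),
              Q (v r) = 0 & bform B (v r) (v r *m g ^+ pk p r) = 1])
  (hodd : odd nn ->
          (forall t, (1 <= t <= size p)%N ->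
             forall i : int, - (pk p t)%:Z <= i <= (pk p t)%:Z - 1 ->
             bform B (v t *m gpow g i) (v (size p).+1) = 0)
          /\ Q (v (size p).+1) = 1) :
  (forall r, (1 <= r <= size p)%N ->
     (Xsp g v p r :&: perpmx B (Xsp g v p r) == (0 : 'M[K]_nn))%MS /\
     (Xsp g v p r + perpmx B (Xsp g v p r) == 1%:M)%MS)
  /\
  ((exists m, (g - 1%:M) ^+ m = 0) ->
     (forall k, (Lambda p nn k <= \rank ((g - 1%:M) ^+ k))%N)
     /\ \rank ((g - 1%:M) ^+ 0) = Lambda p nn 0
     /\
     ((forall k, \rank ((g - 1%:M) ^+ k) = Lambda p nn k) ->
        (forall r, (1 <= r <= (size p).+1)%N -> (Xsp g v p r *m g <= Xsp g v p r)%MS)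
        /\ (forall r r', (1 <= r <= (size p).+1)%N -> (1 <= r' <= (size p).+1)%N ->
              r != r' -> Xsp g v p r *m B *m (Xsp g v p r')^T = 0))).
Proof.
have [g_unit g_iso _] := hg.
have [pk_le pk_gt0] := partition_pk hp.
have [_ [_ sum_p]] := hp.
have v_self r rp := let: And3 h _ _ := hself r rp in h.
have v_dual r rp := let: And3 _ _ h := hself r rp in h.
have v_last nn_odd := (hodd nn_odd).1.
have [part1 rank_ge part3] := Xsp_decomposition g_unit g_iso (form_data_bform_eq0C hform)
  pk_le pk_gt0 hcross v_self v_dual v_last.
have rank_N0 : \rank ((g - 1%:M) ^+ 0) = Lambda p nn 0 by rewrite Lambda0 // expr0 mxrank1.
split; first exact: part1.
move=> _; split; first by case=> [|k]; rewrite ?rank_N0 ?LambdaS ?rank_ge.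
split; first exact: rank_N0.
by move=> rankN; apply: part3 => -[|k] // _; rewrite rankN LambdaS.
Qed.
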